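(* Let $n$ be an odd positive integer and let $S\cong\begin{bmatrix} C_n\\ B\end{bmatrix}$ be a linear matrix. Then either $g(S)<n$ or every row of $B$ has at most one or at least three nonzero entries.
   Context: A $\{0,1\}$-matrix is linear if it has no $2\times 2$ submatrix with all entries $1$. Matrices are congruent ($\cong$) if one is obtained from the other by permuting rows and columns. $C_n$ is the $n\times n$ matrix with $c_{i,j}=1$ iff $j\in\{i,i+1\}$ (indices mod $n$). An odd cycle matrix of order $k$ is a matrix congruent to $C_k$ with $k$ odd. For a $\{0,1\}$-matrix $A$, $g(A)=\infty$ if $A$ has no odd cycle submatrix, and otherwise $g(A)$ is the least order of an odd cycle submatrix of $A$. *)

(* {0,1}-matrices are represented as boolean matrices 'M[bool]_(m,n). *)
From mathcomp Require Import all_boot all_order all_algebra all_fingroup.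
Set Implicit Arguments. Unset Strict Implicit. Unset Printing Implicit Defensive.

Definition linear_mx (m n : nat) (A : 'M[bool]_(m, n)) : Prop :=
  ~ exists (i1 i2 : 'I_m) (j1 j2 : 'I_n),
      [/\ i1 != i2, j1 != j2 & [&& A i1 j1, A i1 j2, A i2 j1 & A i2 j2]].

Definition congruent_mx (m n : nat) (A B : 'M[bool]_(m, n)) : Prop :=
  exists (s : 'S_m) (t : 'S_n), forall i j, A i j = B (s i) (t j).

(* C_n : c_{i,j} = 1 iff j in {i, i+1} (indices mod n), 0-based indices. *)
Definition Cmx (n : nat) : 'M[bool]_n :=
  \matrix_(i < n, j < n) ((val j == val i) || (val j == (val i).+1 %% n)).

(* A has an odd cycle submatrix of order k: a k x k submatrix (rows and
   columns selected injectively, in any order, which accounts for the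
   congruence) equal to C_k, with k odd (and k >= 3). *)
Definition odd_cycle_submx (m n : nat) (A : 'M[bool]_(m, n)) (k : nat) : Prop :=
  [/\ odd k, 3 <= k &
   exists (f : 'I_k -> 'I_m) (g : 'I_k -> 'I_n),
     [/\ injective f, injective g & forall i j, A (f i) (g j) = Cmx k i j]].

(* g(A) < N  (g(A) = infinity when there is no odd cycle submatrix). *)
Definition girth_lt (m n : nat) (A : 'M[bool]_(m, n)) (N : nat) : Prop :=
  exists k, k < N /\ odd_cycle_submx A k.

Definition row_nnz (r n : nat) (B : 'M[bool]_(r, n)) (i : 'I_r) : nat :=
  #|[set j | B i j]|.

From mathcomp Require Import all_boot all_order all_algebra all_fingroup.
From mathcomp Require Import zify.
Set Implicit Arguments. Unset Strict Implicit. Unset Printing Implicit Defensive.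

(* Linearity and odd cycle submatrices are invariant under congruence, so we may
   work with [col_mx C_n B] itself. A row of [B] with exactly two ones, in
   columns p < q, splits the cycle of C_n into two arcs: together with the rows
   of C_n along an arc, it forms a cycle submatrix whose order is the arc length
   plus one. The two orders sum to n + 2, which is odd, so one of them is odd;
   linearity forbids p and q to be cyclically adjacent (that would be a 2x2
   all-ones submatrix with the row of C_n starting at p), so both orders lie
   strictly between 2 and n. *)

Definition embeds_mx (m n k : nat) (A : 'M[bool]_(m, n)) (C : 'M[bool]_k) : Prop :=
  exists (f : 'I_k -> 'I_m) (g : 'I_k -> 'I_n),
    [/\ injective f, injective g & forall i j, A (f i) (g j) = C i j].

Section Congruence.
Variables (m n : nat) (A B : 'M[bool]_(m, n)).
Hypothesis congr_AB : congruent_mx A B.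

Lemma congruent_linear_mx : linear_mx A -> linear_mx B.
Proof.
case: congr_AB => s [t AE] A_lin [i1 [i2 [j1 [j2 [ne_i ne_j all1]]]]]; apply: A_lin.
exists (s^-1 i1)%g, (s^-1 i2)%g, (t^-1 j1)%g, (t^-1 j2)%g.
by rewrite !AE !permKV !(inj_eq perm_inj).
Qed.

Lemma congruent_embeds_mx k (C : 'M[bool]_k) : embeds_mx B C -> embeds_mx A C.
Proof.
case: congr_AB => s [t AE] [f [g [f_inj g_inj fgE]]].
exists (fun i => s^-1 (f i))%g, (fun j => t^-1 (g j))%g; split.
- by move=> i j /perm_inj /f_inj.
- by move=> i j /perm_inj /g_inj.
- by move=> i j; rewrite AE !permKV.
Qed.

Lemma congruent_girth_lt N : girth_lt B N -> girth_lt A N.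
Proof.
case=> k [lt_kN [k_odd k_ge3 BC]].
by exists k; split=> //; split=> //; exact: congruent_embeds_mx BC.
Qed.

End Congruence.

Lemma eqn_modDl_small n c a b : a < n -> b < n ->
  ((c + a) %% n == (c + b) %% n) = (a == b).
Proof. by move=> a_lt b_lt; rewrite eqn_modDl !modn_small. Qed.

Lemma odd_arc_length n d : odd n -> d <= n -> odd d.+1 || odd (n - d).+1.
Proof.
by move=> + le_dn; rewrite -{1}(subnK le_dn) oddD /=; case: (odd d); case: odd.
Qed.

Section RowOfWeightTwo.
Variables (n r : nat) (B : 'M[bool]_(r, n)).
Local Notation A := (col_mx (Cmx n) B).

Lemma adjacent_row_not_linear (b : 'I_r) (p q : 'I_n) :
  1 < n -> q = p.+1 %% n :> nat -> B b p -> B b q -> ~ linear_mx A.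
Proof.
move=> n_gt1 qE Bp Bq; apply; exists (lshift r p), (rshift n b), p, q; split.
- by apply/eqP => /(congr1 val) /=; have := ltn_ord p; lia.
- apply/eqP => /(congr1 val); rewrite /= qE.
  have := ltn_ord p; rewrite leq_eqVlt => /orP[/eqP last_p | lt_pn].
  + by rewrite last_p modnn; lia.
  + by rewrite modn_small //; lia.
- by rewrite !col_mxEu !col_mxEd Bp Bq /Cmx !mxE /= qE !eqxx orbT.
Qed.

Lemma embeds_arc_cycle (b : 'I_r) (c L : nat) :
  c < n -> 2 <= L <= n ->
  (forall y : 'I_n, B b y = (y == c :> nat) || (y == (c + L.-1) %% n :> nat)) ->
  embeds_mx A (Cmx L).
Proof.
move=> lt_cn /andP [L_ge2 L_le] Bb.
have n_gt0 : 0 < n by lia.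
(* Rows c, c+1, ..., c+L-2 of C_n followed by row b, on columns c, ..., c+L-1
   (all indices mod n). *)
have lt_n (i : 'I_L) : i < n by apply: leq_trans (ltn_ord i) L_le.
pose g (j : 'I_L) : 'I_n := Ordinal (ltn_pmod (c + j) n_gt0).
pose f (i : 'I_L) : 'I_(n + r) :=
  if i < L.-1 then lshift r (g i) else rshift n b.
have gE i j : (g i == g j) = (i == j) by exact: eqn_modDl_small.
exists f, g; split.
- move=> i j; rewrite /f.
  case: ifPn => lt_i; case: ifPn => lt_j => /(congr1 val) /= fij.
  + by apply/eqP; rewrite -gE; apply/eqP/val_inj.
  + by have := ltn_pmod (c + i) n_gt0; lia.
  + by have := ltn_pmod (c + j) n_gt0; lia.
  + by apply: ord_inj; move: lt_i lt_j; have := ltn_ord i; have := ltn_ord j; lia.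
- by move=> i j /eqP; rewrite gE => /eqP.
- move=> i j; rewrite /f; case: ifPn => lt_i.
  + rewrite col_mxEu /Cmx !mxE /= -addn1 modnDml -addnA addn1.
    have lt_i1 : i.+1 < L by have := ltn_ord i; lia.
    rewrite !eqn_modDl_small ?lt_n ?(leq_trans lt_i1 L_le) // (modn_small lt_i1) //.
  + have iE : nat_of_ord i = L.-1 by have := ltn_ord i; lia.
    rewrite col_mxEd Bb /Cmx !mxE /= iE prednK; last lia.
    rewrite modnn -{2}(modn_small lt_cn) -{2}(addn0 c).
    by rewrite orbC !eqn_modDl_small ?lt_n //; lia.
Qed.

Lemma girth_lt_of_row_pair (b : 'I_r) (p q : 'I_n) :
  odd n -> linear_mx A -> p < q ->
  (forall y, B b y = (y == p) || (y == q)) -> girth_lt A n.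
Proof.
move=> n_odd A_lin lt_pq Bb.
have lt_qn := ltn_ord q.
have n_gt1 : 1 < n by lia.
have d_ge2 : 2 <= q - p.
  rewrite leqNgt; apply/negP => d_lt2.
  apply: (adjacent_row_not_linear (b := b) (p := p) (q := q)) => //.
  - by rewrite modn_small; lia.
  - by rewrite Bb eqxx.
  - by rewrite Bb eqxx orbT.
have d_le : q - p <= n - 2.
  rewrite leqNgt; apply/negP => d_gt.
  apply: (adjacent_row_not_linear (b := b) (p := q) (q := p)) => //.
  - by rewrite (_ : q.+1 = n) ?modnn; lia.
  - by rewrite Bb eqxx orbT.
  - by rewrite Bb eqxx.
have le_dn : q - p <= n by lia.
have /orP[odd_arc | odd_arc] := odd_arc_length n_odd le_dn.
- exists (q - p).+1; split; [lia | split; [done | lia |]].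
  apply: (embeds_arc_cycle (b := b) (c := p)) => [||y]; [lia | lia |].
  by rewrite Bb /= subnKC ?modn_small // ltnW.
- exists (n - (q - p)).+1; split; [lia | split; [done | lia |]].
  apply: (embeds_arc_cycle (b := b) (c := q)) => [||y]; [lia | lia |].
  have -> : q + (n - (q - p)).+1.-1 = p + n by lia.
  by rewrite Bb orbC modnDr modn_small.
Qed.

Lemma girth_lt_of_row_nnz2 (b : 'I_r) :
  odd n -> linear_mx A -> row_nnz B b = 2 -> girth_lt A n.
Proof.
move=> n_odd A_lin /eqP/cards2P [p [q [ne_pq /setP Bset]]].
have Bb y : B b y = (y == p) || (y == q) by move: (Bset y); rewrite !inE.
have [lt_pq|lt_qp|eq_pq] := ltngtP p q.
- exact: girth_lt_of_row_pair lt_pq Bb.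
- by apply: girth_lt_of_row_pair lt_qp _ => // y; rewrite orbC.
- by rewrite (val_inj eq_pq) eqxx in ne_pq.
Qed.

End RowOfWeightTwo.

Theorem lemma3 (n r : nat) (S : 'M[bool]_(n + r, n)) (B : 'M[bool]_(r, n)) :
  odd n -> 0 < n ->
  linear_mx S ->
  congruent_mx S (col_mx (Cmx n) B) ->
  girth_lt S n \/ (forall i : 'I_r, row_nnz B i <= 1 \/ 3 <= row_nnz B i).
Proof.
move=> n_odd _ S_lin congr_S.
have [/existsP [b /eqP nnz2]|no_nnz2] := boolP [exists b, row_nnz B b == 2].
  left; apply: (congruent_girth_lt congr_S).
  exact: girth_lt_of_row_nnz2 n_odd (congruent_linear_mx congr_S S_lin) nnz2.
right=> i; move/existsPn/(_ i): no_nnz2; lia.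
Qed.
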